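(* Let $G\subseteq G'$ and $H$ be finite simple graphs ($G$ a subgraph of $G'$) such that $\mathrm{Hom}(G,H)$ is nonempty and disconnected. Let $\eta_1,\eta_2$ be 0-cells of $\mathrm{Hom}(G,H)$ (i.e. graph homomorphisms $G\to H$) lying in distinct connected components of $\mathrm{Hom}(G,H)$. If there are cells $\overline{\eta_1},\overline{\eta_2}\in\mathrm{Hom}(G',H)$ with $\overline{\eta_i}|_{V(G)}=\eta_i$ for $i\in\{1,2\}$, then $\mathrm{Hom}(G',H)$ is also disconnected.
   Context: For graphs $G,H$, the homomorphism complex $\mathrm{Hom}(G,H)$ is the polyhedral complex whose cells are functions $\eta:V(G)\to 2^{V(H)}\setminus\{\varnothing\}$ such that whenever $\{x,y\}\in E(G)$ we have $\eta(x)\times\eta(y)\subseteq E(H)$; the cell $\eta$ is a product of simplices of dimension $\sum_{v}(|\eta(v)|-1)$, with face relation $\eta\subseteq\tau$ iff $\eta(v)\subseteq\tau(v)$ for all $v$. A 0-cell $\eta$ (a homomorphism, written with singleton values) is identified with the function assigning the singleton $\eta(v)$. Disconnected means nonempty with more than one path component. *)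

From mathcomp Require Import all_boot.
Set Implicit Arguments. Unset Strict Implicit. Unset Printing Implicit Defensive.

Definition simple_graph (V : finType) (e : rel V) : Prop :=
  symmetric e /\ irreflexive e.

Section HomComplex.
Variables (V W : finType) (eG : rel V) (eH : rel W).

(* Cells of Hom(G,H): eta : V -> nonempty subsets of V(H) with
   eta(x) x eta(y) contained in E(H) for every edge {x,y} of G. *)
Definition hom_cell (eta : {ffun V -> {set W}}) : bool :=
  [forall x, eta x != set0] &&
  [forall x, forall y, eG x y ==>
     [forall a in eta x, forall b in eta y, eH a b]].

Definition hom_face (eta tau : {ffun V -> {set W}}) : bool :=
  [forall v, eta v \subset tau v].

Definition hom_adj : rel {ffun V -> {set W}} :=
  fun eta tau => [&& hom_cell eta, hom_cell tau &
                     hom_face eta tau || hom_face tau eta].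

(* Two cells lie in the same path component of Hom(G,H) iff they are joined
   by a chain of cells, each a face of the next or vice versa. *)
Definition hom_connected (eta tau : {ffun V -> {set W}}) : bool :=
  connect hom_adj eta tau.

Definition hom_disconnected : Prop :=
  (exists eta, hom_cell eta) /\
  (exists eta tau, [/\ hom_cell eta, hom_cell tau & ~~ hom_connected eta tau]).

End HomComplex.

Definition zero_cell (V W : finType) (h : V -> W) : {ffun V -> {set W}} :=
  [ffun v => [set h v]].

(* Restriction of a cell of Hom(G',H) to V(G), where G is identified with its
   image under the vertex embedding f : V -> V'. *)
Definition restrict_cell (V V' W : finType) (f : V -> V')
  (eta : {ffun V' -> {set W}}) : {ffun V -> {set W}} :=
  [ffun v => eta (f v)].

From mathcomp Require Import all_boot.

(* Restriction to V(G) maps cells of Hom(G',H) to cells of Hom(G,H) and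
   preserves the face relation, so it maps chains of cells to chains of cells.
   A chain joining the two extensions in Hom(G',H) would thus restrict to one
   joining eta_1 and eta_2 in Hom(G,H). *)

Lemma homo_connect (T T' : finType) (e : rel T) (e' : rel T') (g : T -> T') :
  {homo g : x y / e x y >-> e' x y} ->
  {homo g : x y / connect e x y >-> connect e' x y}.
Proof.
move=> ge x y /connectP[p]; elim: p x => [|z p IHp] x /=.
  by move=> _ ->; exact: connect0.
case/andP=> exz pz last_y; apply: connect_trans (connect1 (ge _ _ exz)) _.
exact: IHp.
Qed.

Section Restriction.
Variables (V V' W : finType) (eG : rel V) (eG' : rel V') (eH : rel W).
Variables (f : V -> V').
Hypothesis f_sub : forall x y, eG x y -> eG' (f x) (f y).

Lemma restrict_hom_cell (eta : {ffun V' -> {set W}}) :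
  hom_cell eG' eH eta -> hom_cell eG eH (restrict_cell f eta).
Proof.
case/andP=> /forallP eta_ne /forallP eta_edge; apply/andP; split.
  by apply/forallP=> x; rewrite ffunE.
apply/forallP=> x; apply/forallP=> y; apply/implyP=> exy; rewrite !ffunE.
by move/forallP/(_ (f y))/implyP: (eta_edge (f x)); apply; exact: f_sub.
Qed.

Lemma restrict_hom_face (eta tau : {ffun V' -> {set W}}) :
  hom_face eta tau -> hom_face (restrict_cell f eta) (restrict_cell f tau).
Proof. by move/forallP=> sub; apply/forallP=> v; rewrite !ffunE. Qed.

Lemma restrict_hom_adj (eta tau : {ffun V' -> {set W}}) :
  hom_adj eG' eH eta tau ->
  hom_adj eG eH (restrict_cell f eta) (restrict_cell f tau).
Proof.
rewrite /hom_adj; case/and3P=> /restrict_hom_cell -> /restrict_hom_cell -> /=.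
by case/orP=> /restrict_hom_face ->; rewrite ?orbT.
Qed.

Lemma restrict_hom_connected (eta tau : {ffun V' -> {set W}}) :
  hom_connected eG' eH eta tau ->
  hom_connected eG eH (restrict_cell f eta) (restrict_cell f tau).
Proof. exact/homo_connect/restrict_hom_adj. Qed.

End Restriction.

Theorem lemma4p2
  (V V' W : finType) (eG : rel V) (eG' : rel V') (eH : rel W)
  (f : V -> V')
  (sG : simple_graph eG) (sG' : simple_graph eG') (sH : simple_graph eH)
  (f_inj : injective f)
  (f_sub : forall x y, eG x y -> eG' (f x) (f y))
  (hdisc : hom_disconnected eG eH)
  (h1 h2 : V -> W)
  (c1 : hom_cell eG eH (zero_cell h1))
  (c2 : hom_cell eG eH (zero_cell h2))
  (ncon : ~~ hom_connected eG eH (zero_cell h1) (zero_cell h2))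
  (eb1 eb2 : {ffun V' -> {set W}})
  (cb1 : hom_cell eG' eH eb1) (cb2 : hom_cell eG' eH eb2)
  (rb1 : restrict_cell f eb1 = zero_cell h1)
  (rb2 : restrict_cell f eb2 = zero_cell h2) :
  hom_disconnected eG' eH.
Proof.
split; first by exists eb1.
exists eb1, eb2; split=> //; apply: contra ncon => con12.
by rewrite -rb1 -rb2; exact: restrict_hom_connected con12.
Qed.
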